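(* Let $\varepsilon\ge0$ and $m,M\in(0,1)$ with $m\le M$. Define $L_1,L_2\colon[0,1]\to\mathbb{R}^+$ by \[ L_1(p)=\big(e^{\varepsilon}-(e^{\varepsilon}-1)(pM+(1-p)m)\big)\exp\Big(p\tfrac{M}{m}+(1-p)\tfrac{1-m}{1-(pM+(1-p)m)}-1\Big), \] \[ L_2(p)=\Big(e^{\varepsilon}-(e^{\varepsilon}-1)\Big(pM+(1-p)\tfrac{(M+m)-pM}{2-p}\Big)\Big)\exp\Big(p\tfrac{M}{m}+(1-p)\tfrac{1-\frac{(M+m)-pM}{2-p}}{1-M}-1\Big), \] and $l_1=\ln\circ L_1$, $l_2=\ln\circ L_2$. Then: (i) If $\varepsilon\ne0$ and $m\ne M$, $L_1$ and $l_1$ attain their maximum over $[0,1]$ at $p_1=\min\{1,\max\{V_1,0\}\}$, where \[ V_1=\begin{cases}-\frac{1}{3a_1}\Big(b_1+\sqrt[3]{\tfrac{D_{1,1}+\sqrt{D_{1,1}^2-4D_{1,0}^3}}{2}}+\sqrt[3]{\tfrac{D_{1,1}-\sqrt{D_{1,1}^2-4D_{1,0}^3}}{2}}\Big)&\text{if }D_{1,1}^2-4D_{1,0}^3>0,\\[2mm] -\frac{1}{3a_1}\Big(b_1+2\sqrt{D_{1,0}}\cos\big(\tfrac13\arccos\big(\tfrac{D_{1,1}}{2R_1}\big)\big)\Big)&\text{if }D_{1,1}^2-4D_{1,0}^3\le0,\end{cases} \] with $a_1=(e^{\varepsilon}-1)\frac{M}{m}(M-m)^2$, $b_1=-\frac{M-m}{m}\big((m^2-4Mm+2M)(e^{\varepsilon}-1)+e^{\varepsilon}M\big)$,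 $c_1=\frac{1-m}{m}\big((e^{\varepsilon}-1)(2m^2-4Mm-m)+(3e^{\varepsilon}-1)M\big)$, $d_1=-(1-m)\big((e^{\varepsilon}-1)(m-2)+\frac{e^{\varepsilon}}{m}\big)$, $D_{1,0}=b_1^2-3a_1c_1$, $D_{1,1}=2b_1^3-9a_1b_1c_1+27a_1^2d_1$, $R_1=\sqrt{D_{1,0}^3}$; and $L_2$ and $l_2$ attain their maximum over $[0,1]$ at $p_2=\min\{1,\max\{V_2,0\}\}$, where \[ V_2=-\frac{1}{3a_2}\Big(b_2+2\sqrt{D_{2,0}}\cos\Big(\tfrac13\arccos\Big(\tfrac{D_{2,1}}{2R_2}\Big)\Big)\Big) \] with $a_2=\frac{e^{\varepsilon}-(e^{\varepsilon}-1)m}{m}$, $b_2=-\frac{6e^{\varepsilon}-(e^{\varepsilon}-1)(M+5m)}{m}$, $c_2=\frac{1}{(1-M)m}\big(m((e^{\varepsilon}-1)(m+9M-9)-e^{\varepsilon})+4M((e^{\varepsilon}-1)M-4e^{\varepsilon}+1)+12e^{\varepsilon}\big)$, $d_2=-(2e^{\varepsilon}-(e^{\varepsilon}-1)(M+m))\frac{4-4M-m}{(1-M)m}+2(e^{\varepsilon}-1)$, $D_{2,0}=b_2^2-3a_2c_2$, $D_{2,1}=2b_2^3-9a_2b_2c_2+27a_2^2d_2$, $R_2=\sqrt{D_{2,0}^3}$. (ii) If $\varepsilon=0$ and $m\ne M$, $L_1$ and $l_1$ attain their maximum over $[0,1]$ at $p_1=\min\{1,\max\{V_1,0\}\}$ with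 $V_1=\frac{1-m}{M-m}-\frac{\sqrt{Mm(1-m)(1-M)}}{M(M-m)}$, and $L_2$ and $l_2$ attain their maximum over $[0,1]$ at $p_2=\min\{1,\max\{V_2,0\}\}$ with $V_2=2-\frac{\sqrt{m(1-M)}}{1-M}$. (iii) If $m=M$, $L_1$ and $L_2$ are constantly equal to $e^{\varepsilon}-(e^{\varepsilon}-1)m$.
   Context: Cube roots $\sqrt[3]{\cdot}$ of real numbers denote the real cube root. *)

From Stdlib Require Import Reals.
Open Scope R_scope.

Definition cbrt (x : R) : R :=
  if Rlt_dec 0 x then Rpower x (1/3)
  else if Rlt_dec x 0 then - Rpower (- x) (1/3) else 0.

Section S.
Variables (eps m M : R).
Let E := exp eps.

Definition L1 (p : R) : R :=
  let q := p * M + (1 - p) * m in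
  (E - (E - 1) * q) * exp (p * (M / m) + (1 - p) * ((1 - m) / (1 - q)) - 1).

Definition L2 (p : R) : R :=
  let r := ((M + m) - p * M) / (2 - p) in
  (E - (E - 1) * (p * M + (1 - p) * r))
    * exp (p * (M / m) + (1 - p) * ((1 - r) / (1 - M)) - 1).

Definition l1 (p : R) : R := ln (L1 p).
Definition l2 (p : R) : R := ln (L2 p).

Definition a1 := (E - 1) * (M / m) * (M - m) ^ 2.
Definition b1 := - ((M - m) / m) * ((m ^ 2 - 4 * M * m + 2 * M) * (E - 1) + E * M).
Definition c1 := ((1 - m) / m) * ((E - 1) * (2 * m ^ 2 - 4 * M * m - m) + (3 * E - 1) * M).
Definition d1 := - (1 - m) * ((E - 1) * (m - 2) + E / m).
Definition D10 := b1 ^ 2 - 3 * a1 * c1.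
Definition D11 := 2 * b1 ^ 3 - 9 * a1 * b1 * c1 + 27 * a1 ^ 2 * d1.
Definition R1 := sqrt (D10 ^ 3).
Definition V1 : R :=
  if Rlt_dec 0 (D11 ^ 2 - 4 * D10 ^ 3) then
    - (1 / (3 * a1)) * (b1 + cbrt ((D11 + sqrt (D11 ^ 2 - 4 * D10 ^ 3)) / 2)
                          + cbrt ((D11 - sqrt (D11 ^ 2 - 4 * D10 ^ 3)) / 2))
  else
    - (1 / (3 * a1)) * (b1 + 2 * sqrt D10 * cos (1/3 * acos (D11 / (2 * R1)))).

Definition a2 := (E - (E - 1) * m) / m.
Definition b2 := - ((6 * E - (E - 1) * (M + 5 * m)) / m).
Definition c2 := (1 / ((1 - M) * m)) *
  (m * ((E - 1) * (m + 9 * M - 9) - E) + 4 * M * ((E - 1) * M - 4 * E + 1) + 12 * E).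
Definition d2 := - (2 * E - (E - 1) * (M + m)) * ((4 - 4 * M - m) / ((1 - M) * m))
                 + 2 * (E - 1).
Definition D20 := b2 ^ 2 - 3 * a2 * c2.
Definition D21 := 2 * b2 ^ 3 - 9 * a2 * b2 * c2 + 27 * a2 ^ 2 * d2.
Definition R2 := sqrt (D20 ^ 3).
Definition V2 : R :=
  - (1 / (3 * a2)) * (b2 + 2 * sqrt D20 * cos (1/3 * acos (D21 / (2 * R2)))).

Definition V1_0 : R :=
  (1 - m) / (M - m) - sqrt (M * m * (1 - m) * (1 - M)) / (M * (M - m)).
Definition V2_0 : R := 2 - sqrt (m * (1 - M)) / (1 - M).
End S.

Definition clamp01 (v : R) : R := Rmin 1 (Rmax v 0).

Definition is_max_on_01 (f : R -> R) (p : R) : Prop :=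
  0 <= p <= 1 /\ forall q, 0 <= q <= 1 -> f q <= f p.

From Stdlib Require Import Reals Lra Psatz.
From Coquelicot Require Import Coquelicot.
Open Scope R_scope.

(* On (-oo, 1] the derivatives of l1 and l2 are strictly decreasing, so each of l1, l2
   (and L = exp o l) attains its maximum over [0,1] at the clamp to [0,1] of the zero of
   its derivative.  For eps > 0, clearing denominators turns that derivative into a
   positive multiple of -P for a cubic P with positive leading coefficient, and V1, V2 are
   Cardano's and Viete's trigonometric formulas for the smallest real root of P: the
   substitution t = -(3 a x + b) maps it to the largest root of t^3 - 3 D0 t - D1.  The
   cubic of l2 changes sign twice, so its discriminant is negative and only the
   trigonometric formula is needed.  For eps = 0 the zero of the derivative is explicit. *)

Lemma cbrt_pow3 x : cbrt x ^ 3 = x.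
Proof.
  assert (Hroot : forall y, 0 < y -> Rpower y (1/3) ^ 3 = y).
  { intros y hy.
    rewrite <- Rpower_pow by apply exp_pos.
    rewrite Rpower_mult; simpl INR.
    replace (1/3 * (1 + 1 + 1)) with 1 by field.
    now apply Rpower_1. }
  unfold cbrt.
  destruct (Rlt_dec 0 x) as [hx|hx]; [now apply Hroot|].
  destruct (Rlt_dec x 0) as [hx'|hx'].
  - replace ((- Rpower (- x) (1/3)) ^ 3) with (- (Rpower (- x) (1/3) ^ 3)) by ring.
    rewrite Hroot; lra.
  - simpl; lra.
Qed.

Lemma pow3_inj x y : x ^ 3 = y ^ 3 -> x = y.
Proof.
  intro h.
  destruct (Req_dec x y) as [e|ne]; [exact e|exfalso].
  assert (0 < (x - y) ^ 2) by (rewrite <- Rsqr_pow2; apply Rsqr_pos_lt; lra).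
  pose proof (pow2_ge_0 (x + y)).
  assert (0 < x ^ 2 + x * y + y ^ 2) by nra.
  assert (x ^ 3 - y ^ 3 = (x - y) * (x ^ 2 + x * y + y ^ 2)) by ring.
  nra.
Qed.

Lemma cos_3x x : cos (3 * x) = 4 * cos x ^ 3 - 3 * cos x.
Proof.
  replace (3 * x) with (2 * x + x) by ring.
  rewrite cos_plus, cos_2a_cos, sin_2a.
  pose proof (sin2 x) as Hs; unfold Rsqr in Hs.
  replace (2 * sin x * cos x * sin x) with (2 * (sin x * sin x) * cos x) by ring.
  rewrite Hs; ring.
Qed.

Lemma Rdiv_le_contravar k u v : 0 <= k -> 0 < u -> u <= v -> k / v <= k / u.
Proof.
  intros; unfold Rdiv; apply Rmult_le_compat_l; [lra|]; now apply Rinv_le_contravar.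
Qed.

Lemma Rdiv_lt_contravar k u v : 0 < k -> 0 < u -> u < v -> k / v < k / u.
Proof.
  intros; unfold Rdiv; apply Rmult_lt_compat_l; [lra|]; now apply Rinv_0_lt_contravar.
Qed.

Definition depressed_cubic (D0 D1 t : R) : R := t ^ 3 - 3 * D0 * t - D1.

Lemma depressed_cubic_sub D0 D1 s t :
  depressed_cubic D0 D1 t - depressed_cubic D0 D1 s
  = (t - s) * (t ^ 2 + t * s + s ^ 2 - 3 * D0).
Proof. unfold depressed_cubic; ring. Qed.

Definition is_last_root (f : R -> R) (t0 : R) : Prop :=
  f t0 = 0 /\ forall t, t0 < t -> 0 < f t.

Lemma depressed_cubic_last_root D0 D1 t0 :
  depressed_cubic D0 D1 t0 = 0 ->
  (forall t, t0 < t -> 0 < t ^ 2 + t * t0 + t0 ^ 2 - 3 * D0) ->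
  is_last_root (depressed_cubic D0 D1) t0.
Proof.
  intros H0 Hq; split; [exact H0|]; intros t ht.
  pose proof (depressed_cubic_sub D0 D1 t0 t) as Hd.
  specialize (Hq t ht); nra.
Qed.

Lemma cardano_last_root D0 D1 :
  0 < D1 ^ 2 - 4 * D0 ^ 3 ->
  is_last_root (depressed_cubic D0 D1)
    (cbrt ((D1 + sqrt (D1 ^ 2 - 4 * D0 ^ 3)) / 2)
     + cbrt ((D1 - sqrt (D1 ^ 2 - 4 * D0 ^ 3)) / 2)).
Proof.
  intro hdisc.
  set (S := sqrt (D1 ^ 2 - 4 * D0 ^ 3)).
  assert (HS : S * S = D1 ^ 2 - 4 * D0 ^ 3) by (apply sqrt_sqrt; lra).
  assert (HSpos : 0 < S) by (apply sqrt_lt_R0; lra).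
  set (u := cbrt ((D1 + S) / 2)); set (v := cbrt ((D1 - S) / 2)).
  assert (Hu : u ^ 3 = (D1 + S) / 2) by apply cbrt_pow3.
  assert (Hv : v ^ 3 = (D1 - S) / 2) by apply cbrt_pow3.
  assert (Huv : u * v = D0).
  { apply pow3_inj.
    replace ((u * v) ^ 3) with (u ^ 3 * v ^ 3) by ring.
    rewrite Hu, Hv; nra. }
  assert (Huv2 : 0 < (u - v) ^ 2).
  { rewrite <- Rsqr_pow2; apply Rsqr_pos_lt.
    intro e; replace u with v in Hu by lra; lra. }
  apply depressed_cubic_last_root.
  - unfold depressed_cubic; rewrite <- Huv.
    replace ((u + v) ^ 3 - 3 * (u * v) * (u + v)) with (u ^ 3 + v ^ 3) by ring.
    rewrite Hu, Hv; field.
  - intros t _; rewrite <- Huv.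
    replace (t ^ 2 + t * (u + v) + (u + v) ^ 2 - 3 * (u * v))
      with ((t + (u + v) / 2) ^ 2 + 3 / 4 * (u - v) ^ 2) by field.
    pose proof (pow2_ge_0 (t + (u + v) / 2)); lra.
Qed.

Lemma viete_last_root r x :
  0 <= r -> -1 <= x <= 1 ->
  is_last_root (depressed_cubic (r * r) (2 * r ^ 3 * x)) (2 * r * cos (1/3 * acos x)).
Proof.
  intros hr hx.
  set (c := cos (1/3 * acos x)).
  assert (Hc3 : 4 * c ^ 3 - 3 * c = x).
  { unfold c; rewrite <- cos_3x.
    replace (3 * (1/3 * acos x)) with (acos x) by field.
    now apply cos_acos. }
  (* the angle lies in [0, PI/3], where the cosine is at least 1/2 *)
  assert (Hc : 1/2 <= c).
  { pose proof (acos_bound x); pose proof PI_RGT_0.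
    rewrite <- cos_PI3; unfold c.
    destruct (Req_dec (1/3 * acos x) (PI/3)) as [e|ne]; [rewrite e; lra|].
    left; apply cos_decreasing_1; lra. }
  apply depressed_cubic_last_root.
  - unfold depressed_cubic; rewrite <- Hc3; ring.
  - intros t ht.
    assert (r <= 2 * r * c) by nra.
    nra.
Qed.

Lemma trig_last_root D0 D1 :
  D1 ^ 2 - 4 * D0 ^ 3 <= 0 ->
  is_last_root (depressed_cubic D0 D1)
    (2 * sqrt D0 * cos (1/3 * acos (D1 / (2 * sqrt (D0 ^ 3))))).
Proof.
  intro hdisc.
  assert (HD0 : 0 <= D0).
  { destruct (Rle_lt_dec 0 D0) as [h|h]; [exact h|].
    assert (0 < D0 * D0) by nra; nra. }
  set (r := sqrt D0).
  assert (Hr : 0 <= r) by apply sqrt_pos.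
  assert (Hrr : r * r = D0) by (now apply sqrt_sqrt).
  assert (HR : sqrt (D0 ^ 3) = r ^ 3).
  { rewrite <- Hrr, <- sqrt_pow2 by (now apply pow_le); f_equal; ring. }
  rewrite HR; set (x := D1 / (2 * r ^ 3)).
  (* when D0 = 0, also D1 = 0 and x = 0 / 0 = 0 *)
  assert (Hx : D1 = 2 * r ^ 3 * x /\ -1 <= x <= 1).
  { destruct (Req_dec r 0) as [e|ne].
    - assert (HD1 : D1 = 0) by (rewrite <- Hrr, e in hdisc; nra).
      unfold x; rewrite HD1, e; unfold Rdiv; rewrite Rmult_0_l; lra.
    - assert (0 < r ^ 3) by (apply pow_lt; lra).
      split; [unfold x; field; lra|].
      assert (x ^ 2 <= 1).
      { unfold x; replace ((D1 / (2 * r ^ 3)) ^ 2) with (D1 ^ 2 / (4 * (r * r) ^ 3)) by (field; lra).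
        apply Rmult_le_reg_r with (4 * (r * r) ^ 3); [nra|].
        unfold Rdiv; rewrite Rmult_assoc, Rinv_l by nra; nra. }
      nra. }
  destruct Hx as [HD1 Hx].
  replace (depressed_cubic D0 D1) with (depressed_cubic (r * r) (2 * r ^ 3 * x))
    by now rewrite Hrr, <- HD1.
  now apply viete_last_root.
Qed.

Lemma depressed_cubic_disc_factor r D1 :
  D1 ^ 2 - 4 * (r * r) ^ 3
  = depressed_cubic (r * r) D1 (- r) * depressed_cubic (r * r) D1 r.
Proof. unfold depressed_cubic; ring. Qed.

Lemma depressed_cubic_disc_neg D0 D1 y2 y3 :
  y2 < y3 -> 0 < depressed_cubic D0 D1 y2 -> depressed_cubic D0 D1 y3 < 0 ->
  D1 ^ 2 - 4 * D0 ^ 3 < 0.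
Proof.
  intros H23 H2 H3.
  pose proof (depressed_cubic_sub D0 D1 y2 y3) as Hd.
  assert (HD0 : 0 < D0).
  { destruct (Rle_lt_dec D0 0); [|assumption].
    assert (0 <= y3 ^ 2 + y3 * y2 + y2 ^ 2) by nra; nra. }
  set (r := sqrt D0).
  assert (Hr : 0 < r) by (now apply sqrt_lt_R0).
  assert (Hrr : r * r = D0) by (apply sqrt_sqrt; lra).
  clearbody r; subst D0.
  (* -r and r are the local maximum and minimum of the cubic *)
  assert (Hmax : 0 < depressed_cubic (r * r) D1 (- r)).
  { pose proof (depressed_cubic_sub (r * r) D1 y2 (- r)).
    destruct (Rle_lt_dec y2 (2 * r)).
    - assert (0 <= (y2 + r) ^ 2 * (2 * r - y2)) by (apply Rmult_le_pos; [apply pow2_ge_0 | lra]); nra.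
    - assert (0 < y3 ^ 2 + y3 * y2 + y2 ^ 2 - 3 * (r * r)) by nra; nra. }
  assert (Hmin : depressed_cubic (r * r) D1 r < 0).
  { pose proof (depressed_cubic_sub (r * r) D1 y3 r).
    destruct (Rle_lt_dec (- (2 * r)) y3).
    - assert (0 <= (y3 - r) ^ 2 * (y3 + 2 * r)) by (apply Rmult_le_pos; [apply pow2_ge_0 | lra]); nra.
    - assert (0 < y3 ^ 2 + y3 * y2 + y2 ^ 2 - 3 * (r * r)) by nra; nra. }
  rewrite depressed_cubic_disc_factor; nra.
Qed.

Definition cubic (a b c d x : R) : R := a * x ^ 3 + b * x ^ 2 + c * x + d.

Lemma depressed_cubic_shift a b c d x :
  depressed_cubic (b ^ 2 - 3 * a * c) (2 * b ^ 3 - 9 * a * b * c + 27 * a ^ 2 * d) (- (3 * a * x + b))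
  = - (27 * a ^ 2 * cubic a b c d x).
Proof. unfold depressed_cubic, cubic; ring. Qed.

Definition is_first_root (f : R -> R) (x0 : R) : Prop :=
  f x0 = 0 /\ forall x, x < x0 -> f x < 0.

Lemma cubic_first_root a b c d t0 :
  0 < a ->
  is_last_root
    (depressed_cubic (b ^ 2 - 3 * a * c) (2 * b ^ 3 - 9 * a * b * c + 27 * a ^ 2 * d)) t0 ->
  is_first_root (cubic a b c d) (- (1 / (3 * a)) * (b + t0)).
Proof.
  intros ha [H0 Hpos].
  assert (Ha2 : 0 < a ^ 2) by (apply pow_lt; lra).
  split.
  - replace t0 with (- (3 * a * (- (1 / (3 * a)) * (b + t0)) + b)) in H0 by (field; lra).
    rewrite depressed_cubic_shift in H0; nra.
  - intros x hx.
    assert (Ht : t0 < - (3 * a * x + b)).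
    { apply (Rmult_lt_compat_l (3 * a)) in hx; [|lra].
      replace (3 * a * (- (1 / (3 * a)) * (b + t0))) with (- (b + t0)) in hx by (field; lra).
      lra. }
    specialize (Hpos _ Ht); rewrite depressed_cubic_shift in Hpos; nra.
Qed.

Lemma cubic_disc_neg a b c d x2 x3 :
  0 < a -> x2 < x3 -> 0 < cubic a b c d x2 -> cubic a b c d x3 < 0 ->
  (2 * b ^ 3 - 9 * a * b * c + 27 * a ^ 2 * d) ^ 2 - 4 * (b ^ 2 - 3 * a * c) ^ 3 < 0.
Proof.
  intros ha H23 H2 H3.
  assert (Ha2 : 0 < a ^ 2) by (apply pow_lt; lra).
  apply depressed_cubic_disc_neg with (- (3 * a * x3 + b)) (- (3 * a * x2 + b));
    rewrite ?depressed_cubic_shift; nra.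
Qed.

Lemma clamp01_bounds V : 0 <= clamp01 V <= 1.
Proof. unfold clamp01, Rmin, Rmax; destruct (Rle_dec V 0); destruct (Rle_dec 1 _); lra. Qed.

Lemma is_max_on_01_of_derivative_sign (F F' : R -> R) (V : R) :
  (forall x, 0 <= x <= 1 -> derivable_pt_lim F x (F' x)) ->
  (forall x, 0 <= x <= 1 -> x < V -> 0 < F' x) ->
  (forall x, 0 <= x <= 1 -> V < x -> F' x < 0) ->
  is_max_on_01 F (clamp01 V).
Proof.
  intros Hd Hpos Hneg.
  pose proof (clamp01_bounds V) as Hp.
  split; [exact Hp|]; intros q Hq.
  set (p := clamp01 V) in *.
  assert (Hbelow : forall c, 0 <= c -> c < p -> c < V).
  { intros c; unfold p, clamp01, Rmin, Rmax; destruct (Rle_dec V 0); destruct (Rle_dec 1 _); lra. }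
  assert (Habove : forall c, p < c -> c <= 1 -> V < c).
  { intros c; unfold p, clamp01, Rmin, Rmax; destruct (Rle_dec V 0); destruct (Rle_dec 1 _); lra. }
  destruct (Rtotal_order q p) as [h|[h|h]].
  - destruct (MVT_cor2 F F' q p h) as [c [Hc1 Hc2]]; [intros; apply Hd; lra|].
    assert (0 < F' c) by (apply Hpos; [lra | apply Hbelow; lra]); nra.
  - subst; lra.
  - destruct (MVT_cor2 F F' p q h) as [c [Hc1 Hc2]]; [intros; apply Hd; lra|].
    assert (F' c < 0) by (apply Hneg; [lra | apply Habove; lra]); nra.
Qed.

Lemma is_max_on_01_of_derivative_factor (F F' w : R -> R) (V : R) :
  (forall x, 0 <= x <= 1 -> derivable_pt_lim F x (F' x)) ->
  (forall x, 0 <= x <= 1 -> 0 < w x /\ F' x = w x * (V - x)) ->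
  is_max_on_01 F (clamp01 V).
Proof.
  intros Hd Hw.
  apply is_max_on_01_of_derivative_sign with F'; [exact Hd| |];
    intros x Hx Hlt; destruct (Hw x Hx) as [Hpos ->]; nra.
Qed.

(* P only controls the sign of F' left of V; to the right of V we use that F' decreases. *)
Lemma is_max_on_01_of_first_root (F F' P w : R -> R) (V : R) :
  (forall x, 0 <= x <= 1 -> derivable_pt_lim F x (F' x)) ->
  (forall x, x <= 1 -> 0 < w x /\ F' x = - (w x * P x)) ->
  is_first_root P V ->
  (forall x y, y < x -> x <= 1 -> F' x < F' y) ->
  is_max_on_01 F (clamp01 V).
Proof.
  intros Hd Hw [HV HPneg] Hdecr.
  apply is_max_on_01_of_derivative_sign with F'; [exact Hd| |].
  - intros x Hx Hlt.
    destruct (Hw x ltac:(lra)) as [Hpos ->].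
    specialize (HPneg x Hlt); nra.
  - intros x Hx Hlt.
    assert (HV' : F' V = 0) by (destruct (Hw V ltac:(lra)) as [_ ->]; rewrite HV; ring).
    specialize (Hdecr x V Hlt ltac:(lra)); lra.
Qed.

Lemma is_max_on_01_exp_ln (F L : R -> R) (p : R) :
  is_max_on_01 F p ->
  (forall x, 0 <= x <= 1 -> L x = exp (F x)) ->
  is_max_on_01 L p /\ is_max_on_01 (fun x => ln (L x)) p.
Proof.
  intros [Hp Hmax] HL.
  split; split; try exact Hp; intros q Hq.
  - rewrite !HL by assumption.
    destruct (Hmax q Hq) as [h|h]; [left; now apply exp_increasing | rewrite h; lra].
  - rewrite !HL, !ln_exp by assumption; now apply Hmax.
Qed.

Section Objectives.

Variables eps m M : R.
Hypotheses (heps : 0 <= eps) (hm : 0 < m < 1) (hM : 0 < M < 1) (hmM : m <= M).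

Lemma one_le_exp_eps : 1 <= exp eps.
Proof. pose proof (exp_ineq1_le eps); lra. Qed.

Lemma L1_base_pos x : x <= 1 -> 0 < exp eps - (exp eps - 1) * (x * M + (1 - x) * m).
Proof.
  intro hx; pose proof one_le_exp_eps.
  assert (x * M + (1 - x) * m <= M) by nra; nra.
Qed.

Lemma L1_slack_pos x : x <= 1 -> 0 < 1 - (x * M + (1 - x) * m).
Proof. intro hx; nra. Qed.

Definition log_L1 (x : R) : R :=
  ln (exp eps - (exp eps - 1) * (x * M + (1 - x) * m))
  + (x * (M / m) + (1 - x) * ((1 - m) / (1 - (x * M + (1 - x) * m))) - 1).

Definition dlog_L1 (x : R) : R :=
  M / m - (exp eps - 1) * (M - m) / (exp eps - (exp eps - 1) * (x * M + (1 - x) * m))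
  - (1 - m) * (1 - M) / (1 - (x * M + (1 - x) * m)) ^ 2.

Lemma L1_eq_exp_log x : x <= 1 -> L1 eps m M x = exp (log_L1 x).
Proof.
  intro hx; unfold L1, log_L1; cbv zeta.
  rewrite exp_plus, exp_ln by (now apply L1_base_pos); reflexivity.
Qed.

Lemma log_L1_derivative x : x <= 1 -> derivable_pt_lim log_L1 x (dlog_L1 x).
Proof.
  intro hx; pose proof (L1_base_pos x hx); pose proof (L1_slack_pos x hx).
  apply is_derive_Reals; unfold log_L1, dlog_L1.
  auto_derive; [repeat split; lra|].
  field; repeat split; lra.
Qed.

Lemma dlog_L1_cubic x : x <= 1 ->
  dlog_L1 x =
  - ((M - m) / ((exp eps - (exp eps - 1) * (x * M + (1 - x) * m))
                * (1 - (x * M + (1 - x) * m)) ^ 2)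
     * cubic (a1 eps m M) (b1 eps m M) (c1 eps m M) (d1 eps m) x).
Proof.
  intro hx; pose proof (L1_base_pos x hx); pose proof (L1_slack_pos x hx).
  unfold dlog_L1, cubic, a1, b1, c1, d1; field; repeat split; lra.
Qed.

Lemma dlog_L1_decreasing x y : m < M -> y < x -> x <= 1 -> dlog_L1 x < dlog_L1 y.
Proof.
  intros hlt hyx hx; pose proof one_le_exp_eps.
  pose proof (L1_base_pos x hx); pose proof (L1_slack_pos x hx).
  assert (Hq : y * M + (1 - y) * m < x * M + (1 - x) * m) by nra.
  assert ((exp eps - 1) * (M - m) / (exp eps - (exp eps - 1) * (y * M + (1 - y) * m))
          <= (exp eps - 1) * (M - m) / (exp eps - (exp eps - 1) * (x * M + (1 - x) * m))).
  { apply Rdiv_le_contravar; nra. }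
  assert ((1 - m) * (1 - M) / (1 - (y * M + (1 - y) * m)) ^ 2
          < (1 - m) * (1 - M) / (1 - (x * M + (1 - x) * m)) ^ 2).
  { apply Rdiv_lt_contravar; [nra | apply pow_lt; lra | nra]. }
  unfold dlog_L1; lra.
Qed.

Lemma V1_first_root : 0 < eps -> m < M ->
  is_first_root (cubic (a1 eps m M) (b1 eps m M) (c1 eps m M) (d1 eps m)) (V1 eps m M).
Proof.
  intros hpos hlt.
  assert (1 < exp eps) by (pose proof (exp_ineq1 eps ltac:(lra)); lra).
  assert (Ha : 0 < a1 eps m M).
  { unfold a1; assert (0 < M / m) by (apply Rdiv_lt_0_compat; lra).
    assert (0 < (M - m) ^ 2) by (apply pow_lt; lra).
    apply Rmult_lt_0_compat; [apply Rmult_lt_0_compat|]; lra. }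
  unfold V1; destruct (Rlt_dec _ _) as [hdisc|hdisc].
  - rewrite Rplus_assoc; apply cubic_first_root; [exact Ha|].
    now apply cardano_last_root.
  - apply cubic_first_root; [exact Ha|].
    apply trig_last_root; lra.
Qed.

Lemma log_L1_max_pos_eps : 0 < eps -> m < M -> is_max_on_01 log_L1 (clamp01 (V1 eps m M)).
Proof.
  intros hpos hlt.
  apply is_max_on_01_of_first_root with dlog_L1
    (cubic (a1 eps m M) (b1 eps m M) (c1 eps m M) (d1 eps m))
    (fun x => (M - m) / ((exp eps - (exp eps - 1) * (x * M + (1 - x) * m))
                         * (1 - (x * M + (1 - x) * m)) ^ 2)).
  - intros x hx; apply log_L1_derivative; lra.
  - intros x hx; split; [|now apply dlog_L1_cubic].
    pose proof (L1_base_pos x hx); pose proof (L1_slack_pos x hx).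
    apply Rdiv_lt_0_compat; [lra|].
    apply Rmult_lt_0_compat; [lra | apply pow_lt; lra].
  - now apply V1_first_root.
  - intros; now apply dlog_L1_decreasing.
Qed.

Lemma log_L1_max_zero_eps : eps = 0 -> m < M -> is_max_on_01 log_L1 (clamp01 (V1_0 m M)).
Proof.
  intros he hlt.
  set (S := sqrt (M * m * (1 - m) * (1 - M))).
  assert (HK : 0 < M * m * (1 - m) * (1 - M)).
  { replace (M * m * (1 - m) * (1 - M)) with ((M * m) * ((1 - m) * (1 - M))) by ring.
    apply Rmult_lt_0_compat; nra. }
  assert (HS2 : S * S = M * m * (1 - m) * (1 - M)) by (apply sqrt_sqrt; lra).
  assert (HS : 0 < S) by (now apply sqrt_lt_R0).
  apply is_max_on_01_of_derivative_factor with dlog_L1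
    (fun x => (M - m) * (M * (1 - (x * M + (1 - x) * m)) + S)
              / (m * (1 - (x * M + (1 - x) * m)) ^ 2)).
  - intros x hx; apply log_L1_derivative; lra.
  - intros x hx; pose proof (L1_slack_pos x ltac:(lra)).
    split.
    + apply Rdiv_lt_0_compat; [apply Rmult_lt_0_compat; nra|].
      apply Rmult_lt_0_compat; [lra | apply pow_lt; lra].
    + unfold V1_0; fold S.
      replace ((M - m) * (M * (1 - (x * M + (1 - x) * m)) + S) / (m * (1 - (x * M + (1 - x) * m)) ^ 2)
               * ((1 - m) / (M - m) - S / (M * (M - m)) - x))
        with (((M * (1 - (x * M + (1 - x) * m))) ^ 2 - S * S)
              / (M * m * (1 - (x * M + (1 - x) * m)) ^ 2))
        by (field; repeat split; lra).
      rewrite HS2; unfold dlog_L1; rewrite he, exp_0.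
      field; repeat split; lra.
Qed.

Lemma L1_l1_max_on_01 p :
  is_max_on_01 log_L1 p -> is_max_on_01 (L1 eps m M) p /\ is_max_on_01 (l1 eps m M) p.
Proof.
  intro H; apply (is_max_on_01_exp_ln log_L1); [exact H|].
  intros x hx; apply L1_eq_exp_log; lra.
Qed.

Lemma L2_mix x : x <> 2 ->
  x * M + (1 - x) * (((M + m) - x * M) / (2 - x)) = m + (M - m) / (2 - x).
Proof. intro hx; field; lra. Qed.

Lemma L2_base_pos x : x <= 1 ->
  0 < exp eps - (exp eps - 1) * (x * M + (1 - x) * (((M + m) - x * M) / (2 - x))).
Proof.
  intro hx; pose proof one_le_exp_eps.
  rewrite L2_mix by lra.
  assert ((M - m) / (2 - x) <= M - m).
  { rewrite <- (Rdiv_1_r (M - m)) at 2; apply Rdiv_le_contravar; lra. }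
  nra.
Qed.

Lemma L2_den_pos x : x <= 1 ->
  0 < (exp eps - (exp eps - 1) * m) * (2 - x) - (exp eps - 1) * (M - m).
Proof.
  intro hx; pose proof one_le_exp_eps.
  assert (1 <= exp eps - (exp eps - 1) * m) by nra.
  assert (0 <= (exp eps - (exp eps - 1) * m) * (1 - x)) by nra.
  nra.
Qed.

Definition log_L2 (x : R) : R :=
  ln (exp eps - (exp eps - 1) * (x * M + (1 - x) * (((M + m) - x * M) / (2 - x))))
  + (x * (M / m) + (1 - x) * ((1 - ((M + m) - x * M) / (2 - x)) / (1 - M)) - 1).

Definition dlog_L2 (x : R) : R :=
  (M - m) / m - (M - m) / ((1 - M) * (2 - x) ^ 2)
  - (exp eps - 1) * (M - m)
    / ((2 - x) * ((exp eps - (exp eps - 1) * m) * (2 - x) - (exp eps - 1) * (M - m))).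

Lemma L2_eq_exp_log x : x <= 1 -> L2 eps m M x = exp (log_L2 x).
Proof.
  intro hx; unfold L2, log_L2; cbv zeta.
  rewrite exp_plus, exp_ln by (now apply L2_base_pos); reflexivity.
Qed.

Lemma log_L2_derivative x : x <= 1 -> derivable_pt_lim log_L2 x (dlog_L2 x).
Proof.
  intro hx; pose proof (L2_base_pos x hx); pose proof (L2_den_pos x hx).
  apply is_derive_Reals; unfold log_L2, dlog_L2.
  auto_derive; [repeat split; try lra; now apply L2_base_pos|].
  field; repeat split; lra.
Qed.

Lemma cubic_L2 x :
  cubic (a2 eps m) (b2 eps m M) (c2 eps m M) (d2 eps m M) x =
  - ((2 - x) ^ 2 * ((exp eps - (exp eps - 1) * m) * (2 - x) - (exp eps - 1) * (M - m)) / m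
     - ((exp eps - (exp eps - 1) * m) * (2 - x) - (exp eps - 1) * (M - m)) / (1 - M)
     - (exp eps - 1) * (2 - x)).
Proof. unfold cubic, a2, b2, c2, d2; field; lra. Qed.

Lemma dlog_L2_cubic x : x <= 1 ->
  dlog_L2 x =
  - ((M - m) / ((2 - x) ^ 2
                * ((exp eps - (exp eps - 1) * m) * (2 - x) - (exp eps - 1) * (M - m)))
     * cubic (a2 eps m) (b2 eps m M) (c2 eps m M) (d2 eps m M) x).
Proof.
  intro hx; pose proof (L2_den_pos x hx).
  rewrite cubic_L2; unfold dlog_L2; field; repeat split; lra.
Qed.

Lemma dlog_L2_decreasing x y : m < M -> y < x -> x <= 1 -> dlog_L2 x < dlog_L2 y.
Proof.
  intros hlt hyx hx; pose proof one_le_exp_eps.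
  pose proof (L2_den_pos x hx).
  assert (1 <= exp eps - (exp eps - 1) * m) by nra.
  assert ((M - m) / ((1 - M) * (2 - y) ^ 2) < (M - m) / ((1 - M) * (2 - x) ^ 2)).
  { apply Rdiv_lt_contravar; [lra | apply Rmult_lt_0_compat; [lra | apply pow_lt; lra] |].
    apply Rmult_lt_compat_l; nra. }
  assert ((exp eps - 1) * (M - m)
          / ((2 - y) * ((exp eps - (exp eps - 1) * m) * (2 - y) - (exp eps - 1) * (M - m)))
          <= (exp eps - 1) * (M - m)
          / ((2 - x) * ((exp eps - (exp eps - 1) * m) * (2 - x) - (exp eps - 1) * (M - m)))).
  { apply Rdiv_le_contravar; [nra | apply Rmult_lt_0_compat; lra |].
    apply Rmult_le_compat; nra. }
  unfold dlog_L2; lra.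
Qed.

(* The cubic is positive at 2 - be/al, where the last denominator of dlog_L2 vanishes,
   and negative at 2. *)
Lemma L2_disc_neg : 0 < eps -> m < M -> D21 eps m M ^ 2 - 4 * D20 eps m M ^ 3 < 0.
Proof.
  intros hpos hlt.
  assert (HE : 1 < exp eps) by (pose proof (exp_ineq1 eps ltac:(lra)); lra).
  set (al := exp eps - (exp eps - 1) * m).
  set (be := (exp eps - 1) * (M - m)).
  assert (Hal : 1 <= al) by (unfold al; nra).
  assert (Hbe : 0 < be) by (unfold be; nra).
  assert (Hr : 0 < be / al) by (apply Rdiv_lt_0_compat; lra).
  apply (cubic_disc_neg (a2 eps m) (b2 eps m M) (c2 eps m M) (d2 eps m M) (2 - be / al) 2).
  - unfold a2; fold al; apply Rdiv_lt_0_compat; lra.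
  - lra.
  - rewrite cubic_L2; fold al be.
    replace (al * (2 - (2 - be / al)) - be) with 0 by (field; lra).
    assert (0 < (exp eps - 1) * (2 - (2 - be / al))) by (apply Rmult_lt_0_compat; lra).
    unfold Rdiv; lra.
  - rewrite cubic_L2; fold al be.
    assert (0 < be / (1 - M)) by (apply Rdiv_lt_0_compat; lra).
    unfold Rdiv in *; lra.
Qed.

Lemma V2_first_root : 0 < eps -> m < M ->
  is_first_root (cubic (a2 eps m) (b2 eps m M) (c2 eps m M) (d2 eps m M)) (V2 eps m M).
Proof.
  intros hpos hlt.
  pose proof (L2_disc_neg hpos hlt).
  apply cubic_first_root.
  - pose proof one_le_exp_eps; unfold a2; apply Rdiv_lt_0_compat; nra.
  - apply trig_last_root; lra.
Qed.

Lemma log_L2_max_pos_eps : 0 < eps -> m < M -> is_max_on_01 log_L2 (clamp01 (V2 eps m M)).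
Proof.
  intros hpos hlt.
  apply is_max_on_01_of_first_root with dlog_L2
    (cubic (a2 eps m) (b2 eps m M) (c2 eps m M) (d2 eps m M))
    (fun x => (M - m) / ((2 - x) ^ 2
               * ((exp eps - (exp eps - 1) * m) * (2 - x) - (exp eps - 1) * (M - m)))).
  - intros x hx; apply log_L2_derivative; lra.
  - intros x hx; split; [|now apply dlog_L2_cubic].
    pose proof (L2_den_pos x hx).
    apply Rdiv_lt_0_compat; [lra|].
    apply Rmult_lt_0_compat; [apply pow_lt|]; lra.
  - now apply V2_first_root.
  - intros; now apply dlog_L2_decreasing.
Qed.

Lemma log_L2_max_zero_eps : eps = 0 -> m < M -> is_max_on_01 log_L2 (clamp01 (V2_0 m M)).
Proof.
  intros he hlt.
  set (S := sqrt (m * (1 - M))).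
  assert (HS2 : S * S = m * (1 - M)) by (apply sqrt_sqrt; nra).
  assert (HS : 0 < S) by (apply sqrt_lt_R0; nra).
  apply is_max_on_01_of_derivative_factor with dlog_L2
    (fun x => (M - m) * ((1 - M) * (2 - x) + S) / (m * (1 - M) * (2 - x) ^ 2)).
  - intros x hx; apply log_L2_derivative; lra.
  - intros x hx; split.
    + apply Rdiv_lt_0_compat; [apply Rmult_lt_0_compat; nra|].
      apply Rmult_lt_0_compat; [nra | apply pow_lt; lra].
    + unfold V2_0; fold S.
      replace ((M - m) * ((1 - M) * (2 - x) + S) / (m * (1 - M) * (2 - x) ^ 2)
               * (2 - S / (1 - M) - x))
        with ((M - m) * (((1 - M) * (2 - x)) ^ 2 - S * S) / (m * (1 - M) ^ 2 * (2 - x) ^ 2))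
        by (field; repeat split; lra).
      rewrite HS2; unfold dlog_L2; rewrite he, exp_0.
      field; repeat split; lra.
Qed.

Lemma L2_l2_max_on_01 p :
  is_max_on_01 log_L2 p -> is_max_on_01 (L2 eps m M) p /\ is_max_on_01 (l2 eps m M) p.
Proof.
  intro H; apply (is_max_on_01_exp_ln log_L2); [exact H|].
  intros x hx; apply L2_eq_exp_log; lra.
Qed.
Lemma max_on_01_pos_eps : 0 < eps -> m < M ->
  is_max_on_01 (L1 eps m M) (clamp01 (V1 eps m M)) /\
  is_max_on_01 (l1 eps m M) (clamp01 (V1 eps m M)) /\
  is_max_on_01 (L2 eps m M) (clamp01 (V2 eps m M)) /\
  is_max_on_01 (l2 eps m M) (clamp01 (V2 eps m M)).
Proof.
  intros hpos hlt.
  destruct (L1_l1_max_on_01 _ (log_L1_max_pos_eps hpos hlt)).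
  destruct (L2_l2_max_on_01 _ (log_L2_max_pos_eps hpos hlt)).
  tauto.
Qed.

Lemma max_on_01_zero_eps : eps = 0 -> m < M ->
  is_max_on_01 (L1 eps m M) (clamp01 (V1_0 m M)) /\
  is_max_on_01 (l1 eps m M) (clamp01 (V1_0 m M)) /\
  is_max_on_01 (L2 eps m M) (clamp01 (V2_0 m M)) /\
  is_max_on_01 (l2 eps m M) (clamp01 (V2_0 m M)).
Proof.
  intros he hlt.
  destruct (L1_l1_max_on_01 _ (log_L1_max_zero_eps he hlt)).
  destruct (L2_l2_max_on_01 _ (log_L2_max_zero_eps he hlt)).
  tauto.
Qed.

End Objectives.

Lemma L1_diag eps m p : 0 < m < 1 -> L1 eps m m p = exp eps - (exp eps - 1) * m.
Proof.
  intro hm; unfold L1; cbv zeta.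
  replace (p * m + (1 - p) * m) with m by ring.
  replace (p * (m / m) + (1 - p) * ((1 - m) / (1 - m)) - 1) with 0 by (field; lra).
  rewrite exp_0; ring.
Qed.

Lemma L2_diag eps m p : 0 < m < 1 -> p <= 1 -> L2 eps m m p = exp eps - (exp eps - 1) * m.
Proof.
  intros hm hp; unfold L2; cbv zeta.
  replace ((m + m - p * m) / (2 - p)) with m by (field; lra).
  replace (p * m + (1 - p) * m) with m by ring.
  replace (p * (m / m) + (1 - p) * ((1 - m) / (1 - m)) - 1) with 0 by (field; lra).
  rewrite exp_0; ring.
Qed.

Theorem proposition6 (eps m M : R)
  (heps : 0 <= eps) (hm : 0 < m < 1) (hM : 0 < M < 1) (hmM : m <= M) :
  (eps <> 0 -> m <> M ->
     is_max_on_01 (L1 eps m M) (clamp01 (V1 eps m M)) /\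
     is_max_on_01 (l1 eps m M) (clamp01 (V1 eps m M)) /\
     is_max_on_01 (L2 eps m M) (clamp01 (V2 eps m M)) /\
     is_max_on_01 (l2 eps m M) (clamp01 (V2 eps m M))) /\
  (eps = 0 -> m <> M ->
     is_max_on_01 (L1 eps m M) (clamp01 (V1_0 m M)) /\
     is_max_on_01 (l1 eps m M) (clamp01 (V1_0 m M)) /\
     is_max_on_01 (L2 eps m M) (clamp01 (V2_0 m M)) /\
     is_max_on_01 (l2 eps m M) (clamp01 (V2_0 m M))) /\
  (m = M ->
     forall p, 0 <= p <= 1 ->
       L1 eps m M p = exp eps - (exp eps - 1) * m /\
       L2 eps m M p = exp eps - (exp eps - 1) * m).
Proof.
  split; [|split].
  - intros he hne; apply max_on_01_pos_eps; try assumption; lra.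
  - intros he hne; apply max_on_01_zero_eps; try assumption; lra.
  - intros <- p hp; split; [now apply L1_diag | apply L2_diag; lra].
Qed.
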